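(* Let $g\ge 4$ be an even integer. Let $H_g$ be the mixed graph with vertex set $\mathbb{Z}_g\times\{0,1,\dots,g/2-1\}$, edges $\{(i,j),(i+1,j)\}$ for all $i\in\mathbb{Z}_g$ and $0\le j\le g/2-1$, arcs $((i,j),(i,j+1))$ for all $i\in\mathbb{Z}_g$ and $0\le j\le g/2-2$, and arcs $((i,g/2-1),(i+g/2,0))$ for all $i\in\mathbb{Z}_g$ (first coordinates taken modulo $g$). (Equivalently, $H_g$ is the Cartesian product of the undirected cycle $C_g$ with the directed path on $g/2$ vertices, together with the arcs $((i,g/2-1),(i+g/2,0))$.) Then $H_g$ is a $[1,2;g]$-mixed graph of order $\frac{g^2}{2}$.
   Context: A mixed graph is a finite simple graph that may contain both edges and arcs. A $[z,r;g]$-mixed graph is a mixed graph in which every vertex is the tail of exactly $z$ arcs, the head of exactly $z$ arcs, and is incident with exactly $r$ edges, and whose girth is $g$. Walks traverse edges in either direction and arcs only in their direction; a cycle is a closed walk with no repeated vertices (other than start = end) and no repeated edge or arc; the girth is the length of a shortest cycle. *)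

From mathcomp Require Import all_boot.
Set Implicit Arguments. Unset Strict Implicit. Unset Printing Implicit Defensive.

Section MixedGraphs.
Variable T : finType.
(* A mixed graph on vertex set T: [e] is the (symmetric) edge relation,
   [a] the arc relation ([a u v] means an arc with tail u and head v). *)
Variables (e a : rel T).

Definition simple_mixed_graph : Prop :=
  [/\ forall u v, e u v = e v u,
      forall u, ~~ e u u,
      forall u, ~~ a u u &
      forall u v, a u v -> ~~ e u v].

Definition step (u v : T) (b : bool) : bool := if b then e u v else a u v.

Definition is_cycle (k : nat) (v : nat -> T) (b : nat -> bool) : Prop :=
  [/\ 0 < k,
      forall i j, i < k -> j < k -> v i = v j -> i = j,
      forall i, i < k -> step (v i) (v (i.+1 %% k)) (b i) &
      forall i j, i < k -> j < k -> i <> j -> b i = b j ->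
        if b i then [set v i; v (i.+1 %% k)] != [set v j; v (j.+1 %% k)]
        else (v i, v (i.+1 %% k)) != (v j, v (j.+1 %% k))].

Definition has_girth (g : nat) : Prop :=
  (exists v b, is_cycle g v b) /\
  (forall k v b, is_cycle k v b -> g <= k).

Definition zrg_mixed_graph (z r g : nat) : Prop :=
  [/\ simple_mixed_graph,
      forall u, #|[set v | a u v]| = z,
      forall u, #|[set v | a v u]| = z,
      forall u, #|[set v | e u v]| = r &
      has_girth g].
End MixedGraphs.

Unset Implicit Arguments.
Notation HV g := ('I_g * 'I_(g %/ 2))%type.

Definition Hedge (g : nat) : rel (HV g) := fun x y =>
  (val x.2 == val y.2) &&
  ((val y.1 == (val x.1 + 1) %% g) || (val x.1 == (val y.1 + 1) %% g)).

Definition Harc (g : nat) : rel (HV g) := fun x y =>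
  ((val x.1 == val y.1) && (val y.2 == (val x.2).+1))
  || [&& val x.2 == g %/ 2 - 1, val y.2 == 0 & val y.1 == (val x.1 + g %/ 2) %% g].

From mathcomp Require Import all_boot zify.

(* Write h = g/2 and classify the steps of a cycle as forward edges, backward
   edges, up arcs (level +1) and wrap arcs (level h-1 -> 0, column +h).
   Around a cycle the level changes cancel, so (h-1) * #wrap = #up, and the
   column changes cancel modulo g, so #bwd = #fwd + h * #wrap (mod g).  Hence
   a cycle with two wrap arcs has at least 2h = g arcs, and a shorter cycle
   with one wrap arc has fewer than h edges, which cannot shift the column by
   h modulo g.  A cycle without wrap arcs has no up arcs either, so it runs
   inside one layer C_g: if it missed a column, cutting C_g there would turn
   it into a cycle of a path, whose vertex of maximal position has both cycle
   neighbours at the same position. *)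

Lemma modn_lt_double a g : 0 < g -> a < g + g -> a %% g = a - g * (g <= a).
Proof.
move=> g_gt0 a_lt; case: (leqP g a) => [ga|ag] /=.
  by rewrite muln1 -{1}(subnK ga) modnDr modn_small // ltn_subLR.
by rewrite muln0 subn0 modn_small.
Qed.

Lemma even_halfD n : ~~ odd n -> n = n %/ 2 + n %/ 2.
Proof.
by move=> ev; have := odd_double_half n; rewrite (negbTE ev) -divn2; lia.
Qed.

Lemma sum_rotate k (F : nat -> nat) : \sum_(t < k) F (t.+1 %% k) = \sum_(t < k) F t.
Proof. by rewrite [RHS](reindex_inj (@ordS_inj k)). Qed.

Section UnitStepCycle.
Variables (k : nat) (Q : nat -> nat).
Hypothesis k_ge3 : 2 < k.
Hypothesis unit_step : forall t, t < k ->
  Q (t.+1 %% k) = (Q t).+1 \/ Q t = (Q (t.+1 %% k)).+1.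

(* At a maximum of [Q] both cycle neighbours lie one below it. *)
Lemma unit_step_cycle_not_inj : ~ {in gtn k &, injective Q}.
Proof.
move=> Q_inj; have k_gt0 : 0 < k by lia.
case: (@arg_maxnP _ (Ordinal k_gt0) xpredT (Q \o val) isT) => t0 _ t0_max.
have t0k := ltn_ord t0.
have [p pk pS] : exists2 p, p < k & p.+1 %% k = t0.
  case: (posnP t0) => [->|t0_gt0].
    by exists k.-1; rewrite ?prednK ?modnn //; lia.
  by exists t0.-1; rewrite ?prednK ?modn_small //; lia.
have nk : t0.+1 %% k < k by rewrite ltn_pmod.
have Qn : Q t0 = (Q (t0.+1 %% k)).+1.
  by case: (@unit_step t0 t0k) => // Qn; have := t0_max (Ordinal nk) isT; rewrite /= Qn; lia.
have Qp : Q t0 = (Q p).+1.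
  by case: (@unit_step p pk); rewrite pS // => Qp; have := t0_max (Ordinal pk) isT; rewrite /= Qp; lia.
have pn : p = t0.+1 %% k by apply: Q_inj; rewrite ?inE //; lia.
by move: pS; rewrite pn !(modn_lt_double _ _ k_gt0); lia.
Qed.

End UnitStepCycle.

(* Position of [x] on the path obtained by deleting [c] from the cycle [Z_g]. *)
Definition cut_pos g c x := (x + g - c.+1) %% g.

Section CutPosition.
Variables (g c : nat).
Hypothesis c_lt : c < g.

Lemma cut_pos_succ x : x < g -> x != c -> (x + 1) %% g != c ->
  cut_pos g c ((x + 1) %% g) = (cut_pos g c x).+1.
Proof.
move=> x_lt; have g_gt0 : 0 < g by lia.
by rewrite /cut_pos !(modn_lt_double _ _ g_gt0); lia.
Qed.

Lemma cut_pos_inj x y : x < g -> y < g -> x != c -> y != c ->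
  cut_pos g c x = cut_pos g c y -> x = y.
Proof.
move=> x_lt y_lt; have g_gt0 : 0 < g by lia.
by rewrite /cut_pos !(modn_lt_double _ _ g_gt0); lia.
Qed.

End CutPosition.

Section HGraph.
Variable g : nat.
Hypotheses (g_ge4 : 3 < g) (g_even : ~~ odd g).
Local Notation h := (g %/ 2).

Let g_halves : g = h + h. Proof. exact: even_halfD. Qed.
Let g_gt0 : 0 < g. Proof. lia. Qed.
Let h_gt0 : 0 < h. Proof. lia. Qed.

Definition col (x : HV g) : nat := val x.1.
Definition lvl (x : HV g) : nat := val x.2.

Lemma col_lt x : col x < g. Proof. exact: ltn_ord. Qed.
Lemma lvl_lt x : lvl x < h. Proof. exact: ltn_ord. Qed.

Lemma eq_HV x y : (x == y) = (col x == col y) && (lvl x == lvl y).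
Proof. by case: x y => [a b] [c d]. Qed.

Lemma HedgeE x y : Hedge g x y =
  (lvl x == lvl y) && ((col y == (col x + 1) %% g) || (col x == (col y + 1) %% g)).
Proof. by []. Qed.

Lemma HarcE x y : Harc g x y =
  ((col x == col y) && (lvl y == (lvl x).+1))
  || [&& lvl x == h - 1, lvl y == 0 & col y == (col x + h) %% g].
Proof. by []. Qed.

Definition mkHV {i j} (i_lt : i < g) (j_lt : j < h) : HV g := (Ordinal i_lt, Ordinal j_lt).

Lemma col_mkHV i j i_lt j_lt : col (@mkHV i j i_lt j_lt) = i. Proof. by []. Qed.
Lemma lvl_mkHV i j i_lt j_lt : lvl (@mkHV i j i_lt j_lt) = j. Proof. by []. Qed.

Ltac coords := rewrite ?eq_HV ?HedgeE ?HarcE ?col_mkHV ?lvl_mkHV /=.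
Ltac coords_lia := have ? := g_halves; coords; rewrite ?(modn_lt_double _ _ g_gt0); lia.

Lemma H_simple : simple_mixed_graph (Hedge g) (Harc g).
Proof.
by split=> [x y|x|x|x y]; have ? := col_lt x; try have ? := col_lt y; coords_lia.
Qed.

Lemma Harc_out_degree u : #|[set v | Harc g u v]| = 1.
Proof.
have u_col := col_lt u; have u_lvl := lvl_lt u.
have [w w_out] : exists w, forall v, Harc g u v = (v == w).
  case: (ltnP (lvl u).+1 h) => [up|top].
    by exists (mkHV u_col up) => v; have ? := col_lt v; have ? := lvl_lt v;
      coords_lia.
  by exists (mkHV (ltn_pmod (col u + h) g_gt0) h_gt0) => v; have ? := col_lt v; have ? := lvl_lt v;
    coords_lia.
by rewrite (_ : [set v | _] = [set w]) ?cards1 //; apply/setP => v; rewrite !inE w_out.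
Qed.

Lemma Harc_in_degree u : #|[set v | Harc g v u]| = 1.
Proof.
have u_col := col_lt u; have u_lvl := lvl_lt u.
have [w w_in] : exists w, forall v, Harc g v u = (v == w).
  case: (posnP (lvl u)) => [bottom|lvl_gt0].
    have top : h - 1 < h by lia.
    by exists (mkHV (ltn_pmod (col u + h) g_gt0) top) => v; have ? := col_lt v; have ? := lvl_lt v;
      coords_lia.
  have down : (lvl u).-1 < h by lia.
  by exists (mkHV u_col down) => v; have ? := col_lt v; have ? := lvl_lt v;
    coords_lia.
by rewrite (_ : [set v | _] = [set w]) ?cards1 //; apply/setP => v; rewrite !inE w_in.
Qed.

Lemma Hedge_degree u : #|[set v | Hedge g u v]| = 2.
Proof.
have u_col := col_lt u; have u_lvl := lvl_lt u.
set succ_u := mkHV (ltn_pmod (col u + 1) g_gt0) u_lvl.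
set pred_u := mkHV (ltn_pmod (col u + g - 1) g_gt0) u_lvl.
rewrite (_ : [set v | _] = [set succ_u; pred_u]).
  by rewrite cards2; coords_lia.
apply/setP => v; rewrite !inE; have ? := col_lt v; have ? := lvl_lt v; coords_lia.
Qed.

Lemma layer_cycle :
  is_cycle (Hedge g) (Harc g) g (fun t => mkHV (ltn_pmod t g_gt0) h_gt0) (fun=> true).
Proof.
split=> // [i j i_lt j_lt /(congr1 col)|i i_lt|i j i_lt j_lt ij _ /=].
- by rewrite !col_mkHV !modn_small.
- by rewrite /step; coords; rewrite modn_mod (modn_small i_lt); coords_lia.
apply/eqP => same_edge.
have := set21 (mkHV (ltn_pmod i g_gt0) h_gt0) (mkHV (ltn_pmod (i.+1 %% g) g_gt0) h_gt0).
rewrite same_edge in_set2 => i_in.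
have := set21 (mkHV (ltn_pmod j g_gt0) h_gt0) (mkHV (ltn_pmod (j.+1 %% g) g_gt0) h_gt0).
rewrite -same_edge in_set2; move: i_in; coords.
by rewrite !modn_mod (modn_small i_lt) (modn_small j_lt); coords_lia.
Qed.

Definition fwd_edge (x y : HV g) (b : bool) : nat := b && (col y == (col x + 1) %% g).
Definition bwd_edge (x y : HV g) (b : bool) : nat := b && (col y != (col x + 1) %% g).
Definition up_arc (x y : HV g) (b : bool) : nat := ~~ b && (lvl y == (lvl x).+1).
Definition wrap_arc (x y : HV g) (b : bool) : nat := ~~ b && (lvl y != (lvl x).+1).

(* The balances are written without subtraction: a wrap arc lowers the level
   by h - 1 and a backward edge lowers the column by 1. *)
Lemma step_balance x y b : step (Hedge g) (Harc g) x y b ->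
  [/\ lvl y + (h - 1) * wrap_arc x y b = lvl x + up_arc x y b,
      (col y + bwd_edge x y b) %% g = (col x + fwd_edge x y b + h * wrap_arc x y b) %% g &
      fwd_edge x y b + bwd_edge x y b + up_arc x y b + wrap_arc x y b = 1].
Proof.
have ? := col_lt x; have ? := col_lt y; have ? := lvl_lt x; have ? := lvl_lt y.
rewrite /step /fwd_edge /bwd_edge /up_arc /wrap_arc.
by case: b => xy; split; move: xy; coords_lia.
Qed.

Lemma edge_cycle_length_ge k v b : is_cycle (Hedge g) (Harc g) k v b ->
  (forall t, t < k -> b t) -> g <= k.
Proof.
move=> [k_gt0 v_inj v_step v_dist] all_edges; rewrite leqNgt; apply/negP => k_lt.
have edge_step t : t < k -> Hedge g (v t) (v (t.+1 %% k)).
  by move=> t_lt; have := v_step t t_lt; rewrite /step all_edges.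
have k_ge3 : 2 < k.
  case: k k_gt0 {v_inj v_step k_lt} v_dist all_edges edge_step => [|[|[|k]]] // _.
  - by move=> _ _ /(_ 0 erefl); rewrite modnn; have [_ /(_ (v 0)) /negP] := H_simple.
  - move=> dist all_edges _; have := dist 0 1 erefl erefl ltac:(by []).
    have -> : 1 %% 2 = 1 by [].
    by rewrite !all_edges //= setUC modnn eqxx => /(_ erefl).
have lvl_const t : t < k -> lvl (v t) = lvl (v 0).
  elim: t => // t IH t_lt; have := edge_step t (ltnW t_lt).
  by rewrite modn_small // HedgeE => /andP [/eqP <- _]; apply: IH; apply: ltnW.
have col_inj : {in gtn k &, injective (fun t => col (v t))}.
  move=> s t s_lt t_lt /= col_eq; apply: v_inj => //; apply/eqP.
  by rewrite eq_HV col_eq !lvl_const ?eqxx.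
have [c c_lt c_missed] : exists2 c, c < g & forall t, t < k -> col (v t) != c.
  pose cols := [seq col (v t) | t <- iota 0 k].
  have : ~~ all (mem cols) (iota 0 g).
    apply/negP => /allP cover; have := uniq_leq_size (iota_uniq 0 g) cover.
    by rewrite size_map !size_iota; lia.
  rewrite -has_predC => /hasP [c]; rewrite mem_iota /= => c_lt c_notin.
  exists c => // t t_lt; apply: contra c_notin => /eqP <-.
  by apply: map_f; rewrite mem_iota.
apply: (@unit_step_cycle_not_inj k (fun t => cut_pos g c (col (v t))) k_ge3).
  move=> t t_lt; have s_lt : t.+1 %% k < k by rewrite ltn_pmod.
  have := edge_step t t_lt; rewrite HedgeE => /andP [_ /orP [] /eqP succ];
    [left|right]; rewrite succ cut_pos_succ -?succ ?c_missed ?col_lt //.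
move=> s t s_lt t_lt /= same_pos; apply: col_inj => //.
exact: cut_pos_inj _ _ c_lt _ _ (col_lt _) (col_lt _) (c_missed _ s_lt) (c_missed _ t_lt) same_pos.
Qed.

Lemma cycle_length_ge k v b : is_cycle (Hedge g) (Harc g) k v b -> g <= k.
Proof.
move=> C; have [k_gt0 _ v_step _] := C.
pose count (kind : HV g -> HV g -> bool -> nat) :=
  \sum_(t < k) kind (v t) (v (t.+1 %% k)) (b t).
have balance (t : 'I_k) := step_balance _ _ _ (v_step t (ltn_ord t)).
have lvl_balance : (h - 1) * count wrap_arc = count up_arc.
  have : \sum_(t < k) (lvl (v (t.+1 %% k)) + (h - 1) * wrap_arc (v t) (v (t.+1 %% k)) (b t))
       = \sum_(t < k) (lvl (v t) + up_arc (v t) (v (t.+1 %% k)) (b t)).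
    by apply: eq_bigr => t _; have [-> _ _] := balance t.
  by rewrite !big_split -big_distrr /= (sum_rotate k (fun t => lvl (v t))) => /addnI.
have col_balance : count bwd_edge %% g = (count fwd_edge + h * count wrap_arc) %% g.
  have : (\sum_(t < k) (col (v (t.+1 %% k)) + bwd_edge (v t) (v (t.+1 %% k)) (b t))) %% g
       = (\sum_(t < k) (col (v t) + fwd_edge (v t) (v (t.+1 %% k)) (b t)
                        + h * wrap_arc (v t) (v (t.+1 %% k)) (b t))) %% g.
    rewrite -modn_summ -[RHS]modn_summ; congr (_ %% _); apply: eq_bigr => t _.
    by have [_ -> _] := balance t.
  rewrite !big_split -big_distrr /= (sum_rotate k (fun t => col (v t))) -addnA.
  by move/eqP; rewrite eqn_modDl => /eqP.
have kinds : count fwd_edge + count bwd_edge + count up_arc + count wrap_arc = k.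
  rewrite -!big_split /= -[RHS]card_ord -sum1_card.
  by apply: eq_bigr => t _; have [_ _ ->] := balance t.
have [no_wrap|wrap] := eqVneq (count wrap_arc) 0.
  apply: edge_cycle_length_ge C _ => t t_lt.
  have : count up_arc + count wrap_arc == 0 by rewrite -lvl_balance no_wrap muln0.
  rewrite /count -big_split sum_nat_eq0 => /forallP /(_ (Ordinal t_lt)) /=.
  by rewrite /up_arc /wrap_arc; case: (b t) => //=; case: (lvl _ == _).
rewrite leqNgt; apply/negP => k_lt; have ? := g_halves.
have one_wrap : count wrap_arc = 1 by nia.
by rewrite one_wrap muln1 !modn_small in col_balance; lia.
Qed.

End HGraph.

Theorem lemma6 (g : nat) (hg : 4 <= g) (hev : ~~ odd g) :
  zrg_mixed_graph (Hedge g) (Harc g) 1 2 g /\ #|{: HV g}| = g ^ 2 %/ 2.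
Proof.
split; last by have := even_halfD _ hev; rewrite card_prod !card_ord; lia.
split; [exact: H_simple|exact: Harc_out_degree|exact: Harc_in_degree|exact: Hedge_degree|].
split; last by move=> k v b; apply: cycle_length_ge.
by do 2 eexists; apply: layer_cycle.
Qed.
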